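(* Let $G$ be a graph and let $S$ be the set of vertices covered by a maximal (under inclusion) collection of pairwise edge-disjoint induced paws in $G$. Then every vertex $s\in S$ is adjacent to at most one connected component of $G-S$ that is a complete multipartite graph.
   Context: The paw is the graph on four vertices $x_1,x_2,x_3,x_4$ with edges $x_1x_2,x_2x_3,x_1x_3,x_3x_4$. A complete multipartite graph here means one whose vertex set is partitioned into at least three nonempty independent sets (parts) with all edges between different parts present (in particular it contains a triangle). *)

(* Finite simple graph: T : finType, e : rel T symmetric, irreflexive. *)
From mathcomp Require Import all_boot.
Set Implicit Arguments. Unset Strict Implicit. Unset Printing Implicit Defensive.

Section Graphs.
Variables (T : finType) (e : rel T).

Definition paw_verts (p : T * T * T * T) : {set T} :=
  let: (x1, x2, x3, x4) := p in [set x1; x2; x3; x4].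

Definition paw_edges (p : T * T * T * T) : {set {set T}} :=
  let: (x1, x2, x3, x4) := p in
  [set [set x1; x2]; [set x2; x3]; [set x1; x3]; [set x3; x4]].

Definition induced_paw (p : T * T * T * T) : bool :=
  let: (x1, x2, x3, x4) := p in
  [&& uniq [:: x1; x2; x3; x4],
      e x1 x2, e x2 x3, e x1 x3, e x3 x4,
      ~~ e x1 x4 & ~~ e x2 x4].

Definition edge_disjoint (p q : T * T * T * T) : bool :=
  [disjoint paw_edges p & paw_edges q].

Definition paw_packing (Q : {set T * T * T * T}) : bool :=
  [forall p in Q, induced_paw p] &&
  [forall p in Q, forall q in Q, (p != q) ==> edge_disjoint p q].

Definition maximal_paw_packing (Q : {set T * T * T * T}) : Prop :=
  paw_packing Q /\
  forall Q' : {set T * T * T * T}, Q \subset Q' -> paw_packing Q' -> Q' = Q.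

Definition covered (Q : {set T * T * T * T}) : {set T} :=
  \bigcup_(p in Q) paw_verts p.

Definition induced_rel (A : {set T}) : rel T :=
  fun x y => [&& e x y, x \in A & y \in A].

Definition component_of_minus (S C : {set T}) : Prop :=
  exists2 x, x \notin S & C = [set y | connect (induced_rel (~: S)) x y].

Definition complete_multipartite (C : {set T}) : Prop :=
  exists P : {set {set T}},
    [/\ partition P C, 3 <= #|P| &
        forall x y, x \in C -> y \in C -> e x y = (pblock P x != pblock P y)].

Definition adjacent_to (s : T) (C : {set T}) : bool :=
  [exists y in C, e s y].

End Graphs.

From mathcomp Require Import all_boot.
Set Implicit Arguments. Unset Strict Implicit. Unset Printing Implicit Defensive.

(* Suppose s, covered by the packing, has neighbours y1 in C1 and y2 in C2,
   where C1 and C2 are distinct components of G - S and C1 is complete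
   multipartite.  Then y1 lies in a triangle y1 b c of C1.  If s were adjacent
   to b, then y1 b s y2 would be an induced paw; otherwise b c y1 s is one.
   Either paw has three vertices outside S, so each of its edges has an end
   outside S: it is edge-disjoint from every paw of the packing, which
   contradicts maximality. *)

Section PawPacking.
Variables (T : finType) (e : rel T).

Lemma paw_edges_sub_verts (p : T * T * T * T) E :
  E \in paw_edges p -> E \subset paw_verts p.
Proof.
case: p => [[[x1 x2] x3] x4]; rewrite !inE -!orbA => /or4P[]/eqP->;
  by apply/subsetP => z; rewrite !inE => /orP[]->; rewrite ?orbT.
Qed.

Lemma paw_edges_sub_covered (Q : {set T * T * T * T}) q E :
  q \in Q -> E \in paw_edges q -> E \subset covered Q.
Proof.
by move=> qQ /paw_edges_sub_verts sEq; apply: subset_trans sEq (bigcup_sup q qQ).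
Qed.

Lemma paw_packing_setU1 Q p :
  paw_packing e Q -> induced_paw e p -> {in Q, forall q, edge_disjoint p q} ->
  paw_packing e (p |: Q).
Proof.
case/andP=> /forall_inP pawQ /forall_inP disjQ pawp disjp; apply/andP; split.
  by apply/forall_inP => q /setU1P[->|/pawQ].
apply/forall_inP => q /setU1P[->|qQ];
  apply/forall_inP => r /setU1P[->|rQ]; apply/implyP.
- by rewrite eqxx.
- by move=> _; apply: disjp.
- by move=> _; rewrite /edge_disjoint disjoint_sym; apply: disjp.
- exact/implyP/(forall_inP (disjQ q qQ)).
Qed.

Lemma maximal_paw_packing_edge_covered Q p :
  maximal_paw_packing e Q -> induced_paw e p ->
  exists2 E, E \in paw_edges p & E \subset covered Q.
Proof.
move=> [packQ maxQ] pawp.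
have [/exists_inP[E Ep EQ]|noE] := boolP [exists E in paw_edges p, E \subset covered Q].
  by exists E.
have disjp : {in Q, forall q, edge_disjoint p q}.
  move=> q qQ; rewrite /edge_disjoint -setI_eq0; apply/eqP/setP => E.
  rewrite !inE; apply/andP => -[Ep Eq].
  by case/exists_inP: noE; exists E => //; apply: paw_edges_sub_covered Eq.
have pQ : p \in Q.
  by rewrite -(maxQ _ (subsetUr [set p] Q) (paw_packing_setU1 packQ pawp disjp)) setU11.
clear disjp pawp; case: p noE pQ => [[[x1 x2] x3] x4] noE pQ.
case/exists_inP: noE; exists [set x1; x2]; first by rewrite !inE eqxx.
by apply: paw_edges_sub_covered pQ _; rewrite !inE eqxx.
Qed.

Lemma maximal_paw_packing_no_paw Q x1 x2 x3 x4 :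
  maximal_paw_packing e Q -> x1 \notin covered Q -> x2 \notin covered Q ->
  x3 \notin covered Q \/ x4 \notin covered Q ->
  ~~ induced_paw e (x1, x2, x3, x4).
Proof.
move=> maxQ x1Q x2Q x34Q; apply/negP => /(maximal_paw_packing_edge_covered maxQ).
case=> E; rewrite !inE -!orbA => /or4P[]/eqP-> /subsetP EQ.
- by rewrite EQ ?set21 in x1Q.
- by rewrite EQ ?set21 in x2Q.
- by rewrite EQ ?set21 in x1Q.
- by case: x34Q; rewrite EQ ?set21 ?set22.
Qed.

End PawPacking.

Section SimpleGraph.
Variables (T : finType) (e : rel T).
Hypotheses (e_sym : symmetric e) (e_irr : irreflexive e).

Lemma induced_paw_intro x1 x2 x3 x4 :
  x1 != x4 -> x2 != x4 -> e x1 x2 -> e x2 x3 -> e x1 x3 -> e x3 x4 ->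
  ~~ e x1 x4 -> ~~ e x2 x4 -> induced_paw e (x1, x2, x3, x4).
Proof.
have neq x y : e x y -> x != y by apply: contraTneq => ->; rewrite e_irr.
move=> x14 x24 e12 e23 e13 e34 n14 n24.
by rewrite /induced_paw /= !inE !negb_or x14 x24 !neq // e12 e23 e13 e34 n14 n24.
Qed.

Lemma component_of_minus_notin S C y :
  component_of_minus e S C -> y \in C -> y \notin S.
Proof.
case=> x xS ->; rewrite inE => /connectP[p + ->].
elim: p x xS => [|z p IHp] x //= xS /andP[/and3P[_ _ zS] /IHp]; apply.
by rewrite inE in zS.
Qed.

Lemma component_of_minus_connect S C1 C2 y1 y2 :
  component_of_minus e S C1 -> component_of_minus e S C2 ->
  y1 \in C1 -> y2 \in C2 -> connect (induced_rel e (~: S)) y1 y2 -> C1 = C2.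
Proof.
have symS : connect_sym (induced_rel e (~: S)).
  by apply: sym_connect_sym => x y; rewrite /induced_rel e_sym [(x \in _) && _]andbC.
case=> [x1 _ ->] [x2 _ ->]; rewrite !inE => x1y1 x2y2 y1y2.
apply/setP => y; rewrite !inE; apply: same_connect => //.
by rewrite (connect_trans x1y1) // (connect_trans y1y2) // symS.
Qed.

Lemma components_of_minus_separated S C1 C2 u v :
  component_of_minus e S C1 -> component_of_minus e S C2 -> C1 != C2 ->
  u \in C1 -> v \in C2 -> u != v /\ ~~ e u v.
Proof.
move=> compC1 compC2 C12 uC1 vC2.
have eqC := component_of_minus_connect compC1 compC2 uC1 vC2.
split; [apply: contraNneq C12 => uv | apply: contraNN C12 => uv]; apply/eqP/eqC.
  by rewrite uv connect0.
rewrite connect1 // /induced_rel uv !inE.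
by rewrite (component_of_minus_notin compC1 uC1) (component_of_minus_notin compC2 vC2).
Qed.

End SimpleGraph.

Lemma complete_multipartite_triangle (T : finType) (e : rel T) C y :
  complete_multipartite e C -> y \in C ->
  exists b c, [/\ b \in C, c \in C, e y b, e y c & e b c].
Proof.
case=> P [/and3P[/eqP coverP trivP P0] P3 eP] yC.
have yP : pblock P y \in P by rewrite pblock_mem ?coverP.
have /card_gt1P[B [B' []]] : 1 < #|P :\ pblock P y|.
  by move: P3; rewrite (cardsD1 (pblock P y)) yP.
rewrite !inE => /andP[By BP] /andP[B'y B'P] BB'.
have [b bB] : exists b, b \in B by apply/set0Pn; apply: contraNneq P0 => <-.
have [c cB'] : exists c, c \in B' by apply/set0Pn; apply: contraNneq P0 => <-.
have inC A x : A \in P -> x \in A -> x \in C.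
  by move=> AP xA; rewrite -coverP; apply/bigcupP; exists A.
have bC := inC _ _ BP bB; have cC := inC _ _ B'P cB'.
exists b, c; split => //; rewrite eP //.
- by rewrite (def_pblock trivP BP bB) eq_sym.
- by rewrite (def_pblock trivP B'P cB') eq_sym.
- by rewrite (def_pblock trivP BP bB) (def_pblock trivP B'P cB').
Qed.

Theorem lemma4 (T : finType) (e : rel T) (e_sym : symmetric e)
  (e_irr : irreflexive e) (Q : {set T * T * T * T}) :
  maximal_paw_packing e Q ->
  forall s, s \in covered Q ->
  forall C1 C2 : {set T},
    component_of_minus e (covered Q) C1 -> complete_multipartite e C1 ->
    adjacent_to e s C1 ->
    component_of_minus e (covered Q) C2 -> complete_multipartite e C2 ->
    adjacent_to e s C2 ->
    C1 = C2.
Proof.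
move=> maxQ s sS C1 C2 compC1 cmpC1 /exists_inP[y1 y1C1 sy1]
  compC2 _ /exists_inP[y2 y2C2 sy2].
have [//|C12] := eqVneq C1 C2; exfalso.
have C1S u : u \in C1 -> u \notin covered Q := component_of_minus_notin compC1.
have y2S : y2 \notin covered Q := component_of_minus_notin compC2 y2C2.
have C1_neq_s u : u \in C1 -> u != s by move=> uC1; apply: contraNneq (C1S u uC1) => ->.
have sepC u : u \in C1 -> u != y2 /\ ~~ e u y2.
  by move=> uC1; apply: (components_of_minus_separated e_sym compC1 compC2 C12).
have [b [c [bC1 cC1 y1b y1c bc]]] := complete_multipartite_triangle cmpC1 y1C1.
have C1_nadj_s u : u \in C1 -> e y1 u -> ~~ e u s.
  move=> uC1 y1u; apply/negP => us.
  have [y1y2 ny1y2] := sepC _ y1C1; have [uy2 nuy2] := sepC _ uC1.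
  case/negP: (maximal_paw_packing_no_paw (x3 := s) maxQ (C1S _ y1C1) (C1S _ uC1)
    (or_intror y2S)).
  by apply: (induced_paw_intro e_irr); rewrite // e_sym.
case/negP: (maximal_paw_packing_no_paw (x4 := s) maxQ (C1S _ bC1) (C1S _ cC1)
  (or_introl (C1S _ y1C1))).
by apply: (induced_paw_intro e_irr); rewrite ?C1_neq_s ?C1_nadj_s // e_sym.
Qed.
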